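(* (Perfect completeness of the Meadows protocol.) Let a Meadows puzzle on an $n\times n$ grid be given. If the prover $P$ knows a solution of the puzzle and follows the Meadows zero-knowledge protocol described in the context, then the verifier $V$ always accepts.
   Context: Meadows puzzle: an $n\times n$ grid in which some cells $c_1,\dots,c_k$ contain a dot. A solution is a partition of the grid into squares (axis-aligned $s\times s$ blocks of cells) such that each square contains exactly one dotted cell. Cards: each card has either an integer or nothing (a blank card) on its front; all backs are indistinguishable. A pile-shifting shuffle applied to a matrix of face-down cards (entries may be equal-size stacks per row) cyclically shifts its columns by a uniformly random amount unknown to everyone. Chosen cut protocol: given face-down cards (or equal-size stacks) $c'_1,\dots,c'_q$ and a secret index $i$ chosen by $P$, $P$ forms a $3\times q$ matrix with row 1 equal to $c'_1,\dots,c'_q$, row 2 a face-down card $1$ in column $i$ and $0$ elsewhere, row 3 a card $1$ in column 1 and $0$ elsewhere (turned face-down); a pile-shifting shuffle is applied; row 2 is revealed and the card of row 1 above the $1$ is $c'_i$; after use it is put back, face-up cards are turned down, another pile-shifting shuffle is applied, row 3 is revealed and the columns are shifted cyclically so its $1$ returns to column 1. Printing protocol: given a face-down $p\times q$ template and a $p\times q$ area, each template card is placed on the corresponding area card; for each two-card stack, $P$ uses the chosen cut protocol to select a card, it is revealed, $V$ rejects unless it is blank, and it is removed. Meadows protocol: $P$ publicly puts a blank card on every cell, appends $n-1$ rows and $n-1$ columns of blank dummy cards below and to the right, and turns all cards face-down, giving a $(2n-1)\times(2n-1)$ matrix (read row by row as a sequence). $P$ builds $n$ templates, one for each $s=1,\dots,n$: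 an $n\times n$ matrix whose top-left $s\times s$ block consists of cards $1$ and whose other cards are blank; $V$ checks them. Let $B_1,\dots,B_k$ be the squares of $P$'s solution with $c_i\in B_i$. For $i=1,\dots,k$: (1) via the chosen cut protocol $P$ selects the top-left card of the $n\times n$ area whose top-left corner is that of $B_i$; (2) via the chosen cut protocol $P$ selects the template of $B_i$'s size; (3) the printing protocol is applied; (4) all cards on dotted cells are revealed and $V$ rejects unless those on $c_1,\dots,c_i$ are $1$ and those on $c_{i+1},\dots,c_k$ are blank (they are then turned face-down again); (5) $P$ reconstructs the used template, returns it to the pile, and $V$ checks all $n$ templates (rejecting otherwise). Finally $P$ reveals all grid cards and $V$ rejects unless all are $1$; $P$ reveals all dummy cards and $V$ rejects unless all are blank. Otherwise $V$ accepts. *)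

From mathcomp Require Import all_boot.

Set Implicit Arguments.
Unset Strict Implicit.
Unset Printing Implicit Defensive.

Definition card := option nat.
Definition blank : card := None.
Definition num (k : nat) : card := Some k.

(* Puzzle, squares, solutions.  Cells are (row, column) with 0-based
   coordinates; a square is (x, y, s): top-left cell (x, y), side s.   *)
Definition cell := (nat * nat)%type.
Definition square := (nat * nat * nat)%type.

Definition sq_row (B : square) : nat := B.1.1.
Definition sq_col (B : square) : nat := B.1.2.
Definition sq_size (B : square) : nat := B.2.

Definition in_square (c : cell) (B : square) : bool :=
  (sq_row B <= c.1 < sq_row B + sq_size B) &&
  (sq_col B <= c.2 < sq_col B + sq_size B).

Definition meadows_puzzle (n : nat) (dots : seq cell) : Prop :=
  uniq dots /\ all (fun c : cell => (c.1 < n) && (c.2 < n)) dots.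

Definition is_solution (n : nat) (dots : seq cell) (sol : seq square) : Prop :=
  [/\ all (fun B => (0 < sq_size B) && (sq_row B + sq_size B <= n)
                    && (sq_col B + sq_size B <= n)) sol,
      (forall r c, r < n -> c < n -> count (in_square (r, c)) sol = 1)
    & all (fun B => count (fun d => in_square d B) dots == 1) sol].

(* Pile-shifting shuffle on a matrix given as its sequence of columns:
   cyclic shift of the columns by r (r is taken modulo the number of
   columns, so every r : nat denotes one of the possible outcomes). *)
Definition pshift (A : Type) (r : nat) (m : seq A) : seq A :=
  rot (r %% size m) m.

(* Chosen cut protocol.  The 3 x q matrix is stored as a sequence of q
   columns (row1 pile, row2 card, row3 card). *)
Definition marker (q i : nat) : seq card :=
  [seq (if j == i then num 1 else num 0) | j <- iota 0 q].

Definition cc_matrix (T : Type) (cs : seq T) (i : nat) : seq (T * card * card) :=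
  zip (zip cs (marker (size cs) i)) (marker (size cs) 0).

Definition row1 (T : Type) (M : seq (T * card * card)) : seq T :=
  [seq c.1.1 | c <- M].

Definition set_row1 (T : Type) (M : seq (T * card * card)) (r : seq T)
  : seq (T * card * card) :=
  zip (zip r [seq c.1.2 | c <- M]) [seq c.2 | c <- M].

(* First phase: build the matrix, shuffle, reveal row 2; returns the
   shuffled matrix and the revealed column j (row1 at column j = c'_i). *)
Definition cc_open (T : Type) (cs : seq T) (i r1 : nat)
  : seq (T * card * card) * nat :=
  let M := pshift r1 (cc_matrix cs i) in
  (M, find (fun c => c.1.2 == num 1) M).

(* Second phase (after use): put back, shuffle, reveal row 3 and shift
   the columns cyclically so that its 1 returns to column 1. *)
Definition cc_close (T : Type) (M : seq (T * card * card)) (r2 : nat) : seq T :=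
  let M2 := pshift r2 M in
  row1 (rot (find (fun c => c.2 == num 1) M2) M2).

Definition template (n s : nat) : seq card :=
  [seq (if (a < s) && (b < s) then num 1 else blank) | a <- iota 0 n, b <- iota 0 n].

Definition templates (n : nat) : seq (seq card) :=
  [seq template n s | s <- iota 1 n].

(* Printing of one two-card stack (template card t on top of area card g):
   the honest prover selects (chosen cut, shift r) the blank card; it is
   revealed, V rejects unless blank, it is removed, and the other card
   remains on the area position. *)
Definition print_cell (t g : card) (r : nat) : option card :=
  let i := if t == blank then 0 else 1 in
  let (M, j) := cc_open [:: t; g] i r in
  let row := row1 M in
  if nth blank row j == blank then Some (nth blank row (1 - j)) else None.

(* Printing protocol of template tp onto the n x n area of the row-major
   sequence `row` (of the (2n-1) x (2n-1) matrix) whose top-left card is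
   at position j. *)
Definition print (n : nat) (row : seq card) (j : nat) (tp : seq card)
  (rs : nat -> nat -> nat) : option (seq card) :=
  let m := n.*2.-1 in
  foldl (fun acc (ab : nat * nat) =>
           obind (fun row =>
             let p := (j + ab.1 * m + ab.2) %% size row in
             omap (fun c => set_nth blank row p c)
               (print_cell (nth blank tp (ab.1 * n + ab.2)) (nth blank row p)
                  (rs ab.1 ab.2))) acc)
        (Some row) [seq (a, b) | a <- iota 0 n, b <- iota 0 n].

(* The randomness: outcomes of all pile-shifting shuffles.             *)
Record shuffles := Shuffles {
  grid_r1 : nat -> nat;          (* round i, grid chosen cut, 1st shuffle *)
  grid_r2 : nat -> nat;          (* round i, grid chosen cut, 2nd shuffle *)
  tmpl_r1 : nat -> nat;          (* round i, template chosen cut, 1st    *)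
  tmpl_r2 : nat -> nat;          (* round i, template chosen cut, 2nd    *)
  print_r : nat -> nat -> nat -> nat  (* round i, stack (a,b) of printing *)
}.

Definition sol_square (dots : seq cell) (sol : seq square) (i : nat) : square :=
  nth (0, 0, 0) sol (find (in_square (nth (0, 0) dots i)) sol).

(* State: the (2n-1)^2 cards read row by row, and the template pile. *)
Definition mstate := (seq card * seq (seq card))%type.

Definition meadows_round (n : nat) (dots : seq cell) (sol : seq square)
  (rnd : shuffles) (i : nat) (st : mstate) : option mstate :=
  let m := n.*2.-1 in
  let (G, Ts) := st in
  let B := sol_square dots sol i in
  let s := sq_size B in
  (* (1) select top-left card of the n x n area at B's corner *)
  let (MG, jG) := cc_open G (sq_row B * m + sq_col B) (grid_r1 rnd i) in
  (* (2) select the template of B's size *)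
  let (MT, jT) := cc_open Ts s.-1 (tmpl_r1 rnd i) in
  let tp := nth [::] (row1 MT) jT in
  (* (3) printing; then the grid chosen cut is completed *)
  match print n (row1 MG) jG tp (print_r rnd i) with
  | None => None
  | Some rowG =>
    let G' := cc_close (set_row1 MG rowG) (grid_r2 rnd i) in
    (* (4) reveal dotted cells *)
    if all (fun t => nth blank G' (let c := nth (0, 0) dots t in c.1 * m + c.2)
                     == (if t <= i then num 1 else blank))
           (iota 0 (size dots))
    then
      (* (5) reconstruct the template, return it, check all templates *)
      let Ts' := cc_close (set_row1 MT (set_nth [::] (row1 MT) jT (template n s)))
                          (tmpl_r2 rnd i) in
      if Ts' == templates n then Some (G', Ts') else None
    else None
  end.

(* Whole protocol with honest prover knowing solution `sol`; returns
   true iff the verifier accepts. *)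
Definition meadows_protocol (n : nat) (dots : seq cell) (sol : seq square)
  (rnd : shuffles) : bool :=
  let m := n.*2.-1 in
  let G0 := nseq (m * m) blank in
  let T0 := templates n in
  (T0 == templates n) &&            (* V checks the templates *)
  match foldl (fun acc i => obind (meadows_round n dots sol rnd i) acc)
              (Some (G0, T0)) (iota 0 (size dots)) with
  | None => false
  | Some (G, _) =>
      all (fun p => nth blank G p ==
                    (if (p %/ m < n) && (p %% m < n) then num 1 else blank))
          (iota 0 (m * m))
  end.

(* The honest prover's chosen cuts only rotate the piles: the opened column is the one holding
   the selected card, and closing the cut rotates everything back.  Printing commutes with these
   rotations, so round i amounts to stamping the template of B_i onto the unshuffled grid at the
   corner of B_i.  By induction the grid after i rounds carries 1 exactly on B_0, ..., B_(i-1):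
   every stack of round i holds a blank card, because the template is blank outside its s x s
   block and the grid is still blank inside B_i, the squares of a partition being disjoint.
   Since each square contains exactly one dot, a dotted cell shows 1 after round i iff its square
   has been printed.  At the end every grid cell lies in some B_t, because every square of the
   partition contains a dot, while the dummy cards only ever meet blank template cards. *)

From mathcomp Require Import all_boot zify.

Set Implicit Arguments.
Unset Strict Implicit.
Unset Printing Implicit Defensive.

Lemma eqn_modDr_small N k l p : l < N -> p < N -> ((l + k) %% N == (p + k) %% N) = (l == p).
Proof. by move=> hl hp; rewrite eqn_modDr !modn_small. Qed.

Lemma modn_unshift N k i : k <= N -> i < N -> ((i + N - k) %% N + k) %% N = i.
Proof.
move=> hk hi; rewrite modnDml.
have -> : i + N - k + k = i + N by lia.
by rewrite modnDr modn_small.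
Qed.

Lemma find_nth_unique (T : Type) (x0 : T) (p : pred T) s j : j < size s ->
  (forall l, l < size s -> p (nth x0 s l) = (l == j)) -> find p s = j.
Proof.
move=> hj p_j; case: findP => [/negP[] | i lt_is p_i _].
  by apply/(has_nthP x0); exists j; rewrite ?p_j.
by apply/eqP; rewrite -p_j.
Qed.

Section Rotation.
Variables (T : Type) (x0 : T).
Implicit Types (s : seq T) (p : pred T).

Lemma set_nth_nth s l : l < size s -> set_nth x0 s l (nth x0 s l) = s.
Proof.
move=> hl; apply: (@eq_from_nth _ x0) => [|l' _]; first by rewrite size_set_nth; lia.
by rewrite nth_set_nth /=; case: eqP => [->|].
Qed.

Lemma nth_rot k s l : k <= size s -> l < size s ->
  nth x0 (rot k s) l = nth x0 s ((l + k) %% size s).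
Proof.
move=> hk hl; rewrite /rot nth_cat size_drop.
case: ifP => h; first by rewrite nth_drop modn_small ?[k + l]addnC //; lia.
have -> : (l + k) %% size s = l + k - size s.
  by rewrite -{1}(@subnK (size s) (l + k)) ?modnDr ?modn_small //; lia.
by rewrite nth_take; [congr nth | ]; lia.
Qed.

Lemma set_nth_rot k s l c : k <= size s -> l < size s ->
  set_nth x0 (rot k s) l c = rot k (set_nth x0 s ((l + k) %% size s) c).
Proof.
move=> hk hl; have hlk : (l + k) %% size s < size s by rewrite ltn_pmod //; lia.
have size_set : size (set_nth x0 s ((l + k) %% size s) c) = size s.
  by rewrite size_set_nth; lia.
apply: (@eq_from_nth _ x0) => [|l']; first by rewrite size_rot !size_set_nth size_rot; lia.
rewrite size_set_nth size_rot => hl'; have {}hl' : l' < size s by lia.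
rewrite nth_set_nth /= [in RHS]nth_rot size_set //; try lia.
rewrite nth_set_nth /= eqn_modDr_small //.
by case: eqP => // _; rewrite nth_rot.
Qed.

Lemma find_rot p s i k : i < size s -> k <= size s ->
  (forall l, l < size s -> p (nth x0 s l) = (l == i)) ->
  find p (rot k s) = (i + size s - k) %% size s.
Proof.
move=> hi hk p_i; apply: (@find_nth_unique _ x0); rewrite size_rot.
  by rewrite ltn_pmod //; lia.
move=> l hl; rewrite nth_rot // p_i ?ltn_pmod //; try lia.
by rewrite -{1}(modn_unshift hk hi) eqn_modDr_small // ltn_pmod //; lia.
Qed.

Lemma rot_subnK k s : k <= size s -> rot ((size s - k) %% size s) (rot k s) = s.
Proof.
move=> hk; case: (posnP k) => [-> | k_gt0]; first by rewrite subn0 modnn !rot0.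
rewrite modn_small; last lia.
by have := rotK k s; rewrite /rotr size_rot.
Qed.

End Rotation.

Section ZipRot.
Variables A B : Type.
Implicit Types (a : seq A) (b : seq B).

Lemma take_zip k a b : take k (zip a b) = zip (take k a) (take k b).
Proof. by elim: a k b => [|x a IH] [|k] [|y b] //=; rewrite IH. Qed.

Lemma drop_zip k a b : drop k (zip a b) = zip (drop k a) (drop k b).
Proof. by elim: a k b => [|x a IH] [|k] [|y b] //=; rewrite ?zip0s ?IH //; case: drop. Qed.

Lemma zip_rot k a b : size a = size b -> zip (rot k a) (rot k b) = rot k (zip a b).
Proof. by move=> eq_ab; rewrite /rot zip_cat ?take_zip ?drop_zip // !size_drop eq_ab. Qed.

End ZipRot.

Lemma size_marker q i : size (marker q i) = q.
Proof. by rewrite size_map size_iota. Qed.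

Lemma nth_marker q i l : l < q ->
  nth blank (marker q i) l = if l == i then num 1 else num 0.
Proof. by move=> hl; rewrite (nth_map 0) ?size_iota // nth_iota. Qed.

Lemma find_marker_rot q i k : i < q -> k <= q ->
  find (pred1 (num 1)) (rot k (marker q i)) = (i + q - k) %% q.
Proof.
move=> hi hk; rewrite -[in RHS](size_marker q i) (@find_rot _ blank _ _ i) ?size_marker //.
by move=> l hl; rewrite nth_marker //=; case: ifP.
Qed.

Section ChosenCut.
Variable T : Type.
Implicit Types (cs : seq T) (M : seq (T * card * card)).

Lemma size_cc_matrix cs i : size (cc_matrix cs i) = size cs.
Proof. by rewrite !size_zip !size_marker !minnn. Qed.

Lemma row1_cc_matrix cs i : row1 (cc_matrix cs i) = cs.
Proof.
rewrite /row1 (map_comp fst fst) -/(unzip1 _) -/(unzip1 _).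
by rewrite !unzip1_zip // ?size_zip ?size_marker ?minnn.
Qed.

Lemma row2_cc_matrix cs i : [seq c.1.2 | c <- cc_matrix cs i] = marker (size cs) i.
Proof.
rewrite (map_comp snd fst) -/(unzip1 _) -/(unzip2 _).
by rewrite unzip1_zip ?unzip2_zip // ?size_zip ?size_marker ?minnn.
Qed.

Lemma row3_cc_matrix cs i : [seq c.2 | c <- cc_matrix cs i] = marker (size cs) 0.
Proof. by rewrite -/(unzip2 _) unzip2_zip // size_zip !size_marker minnn. Qed.

Lemma row1_set_row1 M r : size r = size M -> row1 (set_row1 M r) = r.
Proof.
move=> hr; rewrite /row1 (map_comp fst fst) -/(unzip1 _) -/(unzip1 _).
by rewrite !unzip1_zip // ?size_zip !size_map ?hr ?minnn.
Qed.

Lemma row3_set_row1 M r : size r = size M ->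
  [seq c.2 | c <- set_row1 M r] = [seq c.2 | c <- M].
Proof. by move=> hr; rewrite -/(unzip2 _) unzip2_zip // size_zip !size_map hr minnn. Qed.

Lemma set_row1_rot k M r : size r = size M ->
  set_row1 (rot k M) (rot k r) = rot k (set_row1 M r).
Proof.
move=> hr; rewrite /set_row1 !map_rot zip_rot ?size_map //.
by rewrite zip_rot // size_zip !size_map hr minnn.
Qed.

Lemma cc_openE cs i r : i < size cs ->
  cc_open cs i r = (pshift r (cc_matrix cs i), (i + size cs - r %% size cs) %% size cs).
Proof.
move=> hi; rewrite /cc_open /pshift size_cc_matrix; congr pair.
rewrite -(find_map (fun c => c.1.2) (pred1 (num 1))) map_rot row2_cc_matrix.
by rewrite find_marker_rot // ltnW // ltn_pmod //; lia.
Qed.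

Lemma row1_pshift cs i r : row1 (pshift r (cc_matrix cs i)) = rot (r %% size cs) cs.
Proof. by rewrite /pshift /row1 map_rot -/(row1 _) row1_cc_matrix size_cc_matrix. Qed.

Lemma cc_close_rot M k r2 : [seq c.2 | c <- M] = marker (size M) 0 ->
  cc_close (rot k M) r2 = row1 M.
Proof.
case: (posnP (size M)) => [/size0nil -> // | M_gt0] row3.
rewrite /cc_close /pshift size_rot [rot (_ %% _) _]rot_rot_add.
set k' := rot_add _ _ _; have hk' : k' <= size M := leq_rot_add _ _ _.
rewrite -(find_map snd (pred1 (num 1))) map_rot row3 find_marker_rot //.
by rewrite add0n rot_subnK.
Qed.

Lemma cc_closeE cs i r r2 row : size row = size cs ->
  cc_close (set_row1 (pshift r (cc_matrix cs i)) row) r2 = rotr (r %% size cs) row.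
Proof.
move=> hrow; rewrite /pshift size_cc_matrix -{1}(rotrK (r %% size cs) row).
rewrite set_row1_rot ?size_rotr ?size_cc_matrix // cc_close_rot.
  by rewrite row1_set_row1 // size_rotr size_cc_matrix.
rewrite row3_set_row1 ?size_rotr ?size_cc_matrix // row3_cc_matrix.
by rewrite /set_row1 !size_zip !size_map size_rotr size_cc_matrix hrow !minnn.
Qed.

Lemma nth_row1_cc_open x0 cs N i r : size cs = N -> i < N ->
  nth x0 (row1 (pshift r (cc_matrix cs i))) ((i + N - r %% N) %% N) = nth x0 cs i.
Proof.
move=> <- hi; have cs_gt0 : 0 < size cs by lia.
by rewrite row1_pshift nth_rot ?ltn_pmod ?modn_unshift // ltnW // ltn_pmod.
Qed.

Lemma cc_close_put_back x0 cs N i r r2 : size cs = N -> i < N ->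
  cc_close (set_row1 (pshift r (cc_matrix cs i))
    (set_nth x0 (row1 (pshift r (cc_matrix cs i))) ((i + N - r %% N) %% N) (nth x0 cs i))) r2
  = cs.
Proof.
move=> size_cs hi; have N_gt0 : 0 < N by lia.
rewrite -(nth_row1_cc_open x0 r size_cs hi) set_nth_nth; last first.
  by rewrite row1_pshift size_rot size_cs ltn_pmod.
by rewrite cc_closeE row1_pshift ?size_rot // rotK.
Qed.

End ChosenCut.

Lemma print_cellE t g r : print_cell t g r =
  if (t == blank) || (g == blank) then Some (if t == blank then g else t) else None.
Proof.
rewrite /print_cell /cc_open /pshift /=.
have : r %% 2 < 2 by rewrite ltn_pmod.
by case: t => [t|]; case: g => [g|]; case: (r %% 2) => [|[|]].
Qed.

Lemma modn_addAC j a b k N :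
  ((j + a + b) %% N + k) %% N = ((j + k) %% N + a + b) %% N.
Proof. by rewrite modnDml -!addnA modnDml; congr (_ %% N); lia. Qed.

Section Printing.
Variables (n : nat) (tp : seq card) (rs : nat -> nat -> nat).

Definition area_pos (j N : nat) (ab : nat * nat) := (j + ab.1 * n.*2.-1 + ab.2) %% N.

Definition print_step (j : nat) (acc : option (seq card)) (ab : nat * nat) :=
  obind (fun row =>
    let p := area_pos j (size row) ab in
    omap (fun c => set_nth blank row p c)
      (print_cell (nth blank tp (ab.1 * n + ab.2)) (nth blank row p) (rs ab.1 ab.2))) acc.

Lemma printE row j :
  print n row j tp rs = foldl (print_step j) (Some row) [seq (a, b) | a <- iota 0 n, b <- iota 0 n].
Proof. by []. Qed.

Lemma foldl_print_step_None j L : foldl (print_step j) None L = None.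
Proof. by elim: L. Qed.

Lemma foldl_print_step_rot N j k L row : 0 < N -> k <= N -> size row = N ->
  foldl (print_step j) (Some (rot k row)) L
  = omap (rot k) (foldl (print_step ((j + k) %% N)) (Some row) L).
Proof.
move=> N_gt0 hk; elim: L row => [|[a b] L IH] row hrow //=.
rewrite size_rot hrow nth_rot ?hrow ?ltn_pmod // modn_addAC.
case: print_cell => [c|] /=; last by rewrite !foldl_print_step_None.
rewrite set_nth_rot ?hrow ?ltn_pmod // modn_addAC IH //.
by rewrite size_set_nth hrow; apply/maxn_idPr; rewrite ltn_pmod.
Qed.

Lemma print_rot row j k : 0 < size row -> k <= size row ->
  print n (rot k row) j tp rs = omap (rot k) (print n row ((j + k) %% size row) tp rs).
Proof. by move=> *; rewrite !printE (foldl_print_step_rot (N := size row)). Qed.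

Lemma foldl_print_step_stamp N j (tt : pred (nat * nat)) L row :
  0 < N -> size row = N -> uniq [seq area_pos j N ab | ab <- L] ->
  {in L, forall ab, nth blank tp (ab.1 * n + ab.2) = if tt ab then num 1 else blank} ->
  {in L, forall ab, tt ab -> nth blank row (area_pos j N ab) = blank} ->
  foldl (print_step j) (Some row) L
  = Some (mkseq (fun q => if has (fun ab => tt ab && (area_pos j N ab == q)) L
                          then num 1 else nth blank row q) N).
Proof.
move=> N_gt0; elim: L row => [|ab L IH] row hrow /=.
  by move=> *; rewrite -hrow mkseq_nth.
case/andP=> pos_new uniqL tp_ab row_ab.
have hpos : area_pos j N ab < N by rewrite ltn_pmod.
set c := if tt ab then num 1 else nth blank row (area_pos j N ab); rewrite hrow.
have -> : print_cell (nth blank tp (ab.1 * n + ab.2)) (nth blank row (area_pos j N ab))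
            (rs ab.1 ab.2) = Some c.
  rewrite print_cellE tp_ab ?mem_head // /c.
  by case: (boolP (tt ab)) => [tab | _] /=; rewrite ?(row_ab ab (mem_head _ _) tab) ?eqxx.
have pos_ne : {in L, forall ab', area_pos j N ab' != area_pos j N ab}.
  by move=> ab' L_ab'; apply: contraNneq pos_new => <-; apply: map_f.
rewrite /= IH //; first last.
- move=> ab' L_ab' t_ab'; rewrite nth_set_nth /= (negbTE (pos_ne _ L_ab')).
  by rewrite row_ab // inE L_ab' orbT.
- by move=> ab' L_ab'; rewrite tp_ab // inE L_ab' orbT.
- by rewrite size_set_nth hrow; apply/maxn_idPr.
congr Some; apply: eq_mkseq => q.
rewrite nth_set_nth /=; case: eqP => [-> | /eqP ne_q].
  rewrite eqxx andbT (negbTE (introN hasP _)) ?orbF /c //.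
  by case=> ab' L_ab' /andP [_ /eqP e]; move: (pos_ne _ L_ab'); rewrite e eqxx.
by rewrite eq_sym (negbTE ne_q) andbF.
Qed.

End Printing.

Lemma nth_allpairs_iota (T : Type) (x0 : T) (f : nat -> nat -> T) st n n' a b :
  a < n -> b < n' ->
  nth x0 [seq f a b | a <- iota st n, b <- iota 0 n'] (a * n' + b) = f (st + a) b.
Proof.
elim: n st a => [|n IH] st a //= ha hb; rewrite nth_cat size_map size_iota.
case: a ha => [|a] ha.
  by rewrite mul0n add0n hb (nth_map 0) ?size_iota // nth_iota // addn0.
rewrite mulSn -addnA ltnNge leq_addr /= addKn IH ?addSnnS //.
Qed.

Lemma nth_template n s a b : a < n -> b < n ->
  nth blank (template n s) (a * n + b) = if (a < s) && (b < s) then num 1 else blank.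
Proof. exact: nth_allpairs_iota. Qed.

Lemma divn_cell m r c : c < m -> (r * m + c) %/ m = r.
Proof. by move=> hc; rewrite divnMDl ?divn_small ?addn0 //; lia. Qed.

Lemma modn_cell m r c : c < m -> (r * m + c) %% m = c.
Proof. by move=> hc; rewrite modnMDl modn_small. Qed.

Lemma cell_index_lt m r c : r < m -> c < m -> r * m + c < m * m.
Proof. by move=> hr hc; have := leq_mul hr (leqnn m); rewrite mulSn; lia. Qed.

Definition painted (m : nat) (Bs : seq square) : seq card :=
  mkseq (fun q => if has (in_square (q %/ m, q %% m)) Bs then num 1 else blank) (m * m).

Lemma size_painted m Bs : size (painted m Bs) = m * m.
Proof. exact: size_mkseq. Qed.

Lemma nth_painted m Bs r c : r < m -> c < m ->
  nth blank (painted m Bs) (r * m + c) = if has (in_square (r, c)) Bs then num 1 else blank.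
Proof. by move=> hr hc; rewrite nth_mkseq ?cell_index_lt // divn_cell ?modn_cell. Qed.

Section Stamping.
Variables (n x y s : nat).
Hypotheses (s_gt0 : 0 < s) (xs_le : x + s <= n) (ys_le : y + s <= n).
Local Notation m := n.*2.-1.
Local Notation area := [seq (a, b) | a <- iota 0 n, b <- iota 0 n].

Lemma mem_area ab : (ab \in area) = (ab.1 < n) && (ab.2 < n).
Proof.
case: ab => a b; apply/allpairsP/andP => [[[a' b'] [/= ha hb [-> ->]]] | [ha hb]].
  by move: ha hb; rewrite !mem_iota.
by exists (a, b); rewrite !mem_iota.
Qed.

Lemma area_shift_lt a : a < n -> (x + a < m) /\ (y + a < m).
Proof. by move=> ha; rewrite -addnn; lia. Qed.

(* The n - 1 dummy rows and columns keep the area inside the matrix: no index wraps around. *)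
Lemma area_posE ab : ab \in area ->
  area_pos n (x * m + y) (m * m) ab = (x + ab.1) * m + (y + ab.2).
Proof.
rewrite mem_area /area_pos => /andP [/area_shift_lt [ha _] /area_shift_lt [_ hb]].
have -> : x * m + y + ab.1 * m + ab.2 = (x + ab.1) * m + (y + ab.2) by rewrite mulnDl; lia.
by rewrite modn_small // cell_index_lt.
Qed.

Lemma uniq_area_pos : uniq [seq area_pos n (x * m + y) (m * m) ab | ab <- area].
Proof.
rewrite map_inj_in_uniq; first by rewrite allpairs_uniq ?iota_uniq // => -[a b] [c d] _ _ [-> ->].
move=> [a b] [a' b'] area_ab area_ab'; rewrite !area_posE //.
move: area_ab area_ab'; rewrite !mem_area => /andP [/area_shift_lt [ha _] /area_shift_lt [_ hb]].
move=> /andP [/area_shift_lt [ha' _] /area_shift_lt [_ hb']] /= e.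
have := divn_cell (x + a) hb; have := modn_cell (x + a) hb; rewrite e divn_cell ?modn_cell //.
by move=> /addnI -> /addnI ->.
Qed.

Lemma has_area_pos q : q < m * m ->
  has (fun ab => (ab.1 < s) && (ab.2 < s) && (area_pos n (x * m + y) (m * m) ab == q)) area
  = in_square (q %/ m, q %% m) (x, y, s).
Proof.
move=> hq; rewrite /in_square /sq_row /sq_col /sq_size /=; apply/hasP/andP.
  move=> [[a b] area_ab /andP [/andP [ha hb] /eqP <-]]; rewrite area_posE //=.
  move: area_ab; rewrite mem_area => /andP [/area_shift_lt [ha' _] /area_shift_lt [_ hb']].
  by rewrite divn_cell ?modn_cell // !leq_addr !ltn_add2l.
move=> [h1 h2]; exists (q %/ m - x, q %% m - y); first by rewrite mem_area /=; lia.
rewrite area_posE ?mem_area /=; last lia.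
apply/andP; split; first lia.
by rewrite !subnKC -?divn_eq //; lia.
Qed.

Lemma print_template_painted Bs rs :
  (forall c, in_square c (x, y, s) -> ~~ has (in_square c) Bs) ->
  print n (painted m Bs) (x * m + y) (template n s) rs = Some (painted m (rcons Bs (x, y, s))).
Proof.
move=> fresh; have m_gt0 : 0 < m by rewrite -addnn; lia.
rewrite printE (foldl_print_step_stamp rs (N := m * m) (tt := fun ab => (ab.1 < s) && (ab.2 < s)))
  ?size_painted ?muln_gt0 ?m_gt0 ?uniq_area_pos //.
- congr Some; rewrite [painted m (rcons _ _)]/painted /mkseq; apply/eq_in_map => q.
  rewrite mem_iota add0n => /= hq.
  rewrite has_area_pos // nth_mkseq // has_rcons.
  by case: in_square.
- by move=> ab; rewrite mem_area => /andP [ha hb]; apply: nth_template.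
move=> ab area_ab /andP [ha hb]; rewrite area_posE //.
move: area_ab; rewrite mem_area => /andP [/area_shift_lt [ha' _] /area_shift_lt [_ hb']].
rewrite nth_painted // ifF //; apply/negbTE/fresh.
by rewrite /in_square /= !leq_addr !ltn_add2l ha hb.
Qed.

End Stamping.

Lemma count1_eq (T : eqType) (p : pred T) s x y :
  count p s = 1 -> x \in s -> y \in s -> p x -> p y -> x = y.
Proof.
rewrite -size_filter => count1 sx sy px py.
have : x \in filter p s by rewrite mem_filter px.
have : y \in filter p s by rewrite mem_filter py.
by case: (filter p s) count1 => [|z [|]] //= _; rewrite !inE => /eqP -> /eqP ->.
Qed.

Section Solution.
Variables (n : nat) (dots : seq cell) (sol : seq square).
Hypotheses (puzzle : meadows_puzzle n dots) (solved : is_solution n dots sol).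
Local Notation dot t := (nth (0, 0) dots t).
Local Notation B t := (sol_square dots sol t).

Lemma dot_in_grid t : t < size dots -> (dot t).1 < n /\ (dot t).2 < n.
Proof. by case: puzzle => _ /allP in_grid /(mem_nth (0, 0)) /in_grid /andP. Qed.

Lemma square_in_grid Bq : Bq \in sol ->
  [/\ 0 < sq_size Bq, sq_row Bq + sq_size Bq <= n & sq_col Bq + sq_size Bq <= n].
Proof. by case: solved => /allP in_grid _ _ /in_grid /andP [/andP [? ?] ?]. Qed.

Lemma square_of_cell_unique c B1 B2 : c.1 < n -> c.2 < n -> B1 \in sol -> B2 \in sol ->
  in_square c B1 -> in_square c B2 -> B1 = B2.
Proof.
case: solved => _ cover _ c1 c2; apply: count1_eq.
by rewrite [c]surjective_pairing cover.
Qed.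

Lemma sol_square_spec t : t < size dots -> B t \in sol /\ in_square (dot t) (B t).
Proof.
move=> ht; have [d1 d2] := dot_in_grid ht.
have has_dot : has (in_square (dot t)) sol.
  by case: solved => _ cover _; rewrite has_count [dot t]surjective_pairing cover.
by split; [rewrite /sol_square mem_nth // -has_find | apply: nth_find].
Qed.

Lemma in_sol_squareE t t' : t < size dots -> t' < size dots ->
  in_square (dot t) (B t') = (t == t').
Proof.
move=> ht ht'; have [B_sol B_dot] := sol_square_spec ht'.
apply/idP/eqP => [in_B | -> //]; apply/eqP; rewrite -(nth_uniq (0, 0) ht ht'); last by case: puzzle.
case: solved => _ _ /allP /(_ _ B_sol) /eqP one_dot; apply/eqP.
by apply: (count1_eq one_dot); rewrite ?mem_nth.
Qed.

Lemma sol_squares_disjoint c t t' : c.1 < n -> c.2 < n -> t < size dots -> t' < size dots ->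
  in_square c (B t) -> in_square c (B t') -> t = t'.
Proof.
move=> c1 c2 ht ht' in_t in_t'; apply/eqP; rewrite -(in_sol_squareE ht ht').
have [B_t dot_t] := sol_square_spec ht; have [B_t' _] := sol_square_spec ht'.
by rewrite -(square_of_cell_unique c1 c2 B_t B_t' in_t in_t').
Qed.

Lemma sol_squares_cover r c : r < n -> c < n ->
  exists2 t, t < size dots & in_square (r, c) (B t).
Proof.
move=> hr hc; case: solved => _ cover /allP one_dot.
have /hasP [Bq Bq_sol in_Bq] : has (in_square (r, c)) sol by rewrite has_count cover.
have /hasP [d d_dots d_Bq] : has (fun d => in_square d Bq) dots.
  by rewrite has_count (eqP (one_dot _ Bq_sol)).
have ht : index d dots < size dots by rewrite index_mem.
exists (index d dots) => //; have [B_sol B_dot] := sol_square_spec ht.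
have [d1 d2] := dot_in_grid ht; rewrite nth_index // in B_dot d1 d2.
by rewrite -(square_of_cell_unique d1 d2 Bq_sol B_sol d_Bq B_dot).
Qed.

End Solution.

Lemma size_templates n : size (templates n) = n.
Proof. by rewrite size_map size_iota. Qed.

Lemma nth_templates n s : 0 < s <= n -> nth [::] (templates n) s.-1 = template n s.
Proof.
case/andP=> s_gt0 s_le; rewrite (nth_map 0) ?size_iota ?nth_iota; try lia.
by congr template; lia.
Qed.

Section Protocol.
Variables (n : nat) (dots : seq cell) (sol : seq square) (rnd : shuffles).
Hypotheses (puzzle : meadows_puzzle n dots) (solved : is_solution n dots sol).
Local Notation m := n.*2.-1.
Local Notation dot t := (nth (0, 0) dots t).
Local Notation B t := (sol_square dots sol t).

Definition grid_after i := painted m [seq B t | t <- iota 0 i].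

Lemma n_le_m : n <= m.
Proof. by rewrite -addnn; lia. Qed.

(* [j <= size dots] matters: past the last dot, [sol_square] returns an arbitrary square. *)
Lemma nth_grid_after_dot j t : j <= size dots -> t < size dots ->
  nth blank (grid_after j) ((dot t).1 * m + (dot t).2) = if t < j then num 1 else blank.
Proof.
move=> hj ht; have [d1 d2] := dot_in_grid puzzle ht.
rewrite nth_painted -?surjective_pairing ?(leq_trans _ n_le_m) // has_map.
congr (if _ then _ else _); apply/hasP/idP => [[t' t'_iota in_t'] | t_lt].
  move: t'_iota; rewrite mem_iota add0n => t'_lt.
  rewrite /= (in_sol_squareE puzzle solved) ?(leq_trans t'_lt) // in in_t'.
  by move/eqP: in_t' => ->.
by exists t; rewrite ?mem_iota //= (in_sol_squareE puzzle solved) ?eqxx.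
Qed.

Lemma grid_after_fresh i c : i < size dots -> in_square c (B i) ->
  ~~ has (in_square c) [seq B t | t <- iota 0 i].
Proof.
move=> hi in_Bi; have [B_sol _] := sol_square_spec puzzle solved hi.
have [_ x_le y_le] := square_in_grid solved B_sol.
have [c1 c2] : c.1 < n /\ c.2 < n.
  by move: in_Bi => /andP [/andP [_ c1] /andP [_ c2]]; lia.
apply/hasP => -[_ /mapP [t t_iota ->] in_Bt]; move: t_iota; rewrite mem_iota => /andP [_ t_lt].
have := sol_squares_disjoint puzzle solved c1 c2 (ltn_trans t_lt hi) hi in_Bt in_Bi.
by move=> eq_ti; rewrite eq_ti ltnn in t_lt.
Qed.

Lemma print_grid_after i rs : i < size dots ->
  print n (grid_after i) (sq_row (B i) * m + sq_col (B i)) (template n (sq_size (B i))) rs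
  = Some (grid_after i.+1).
Proof.
move=> hi; have [B_sol _] := sol_square_spec puzzle solved hi.
have [s_gt0 x_le y_le] := square_in_grid solved B_sol.
move: (fun c => @grid_after_fresh i c hi) s_gt0 x_le y_le.
rewrite /grid_after -[i.+1]addn1 iotaD add0n map_cat cats1.
by case: (B i) => [[x y] s] fresh *; apply: print_template_painted.
Qed.

Lemma meadows_round_grid_after i : i < size dots ->
  meadows_round n dots sol rnd i (grid_after i, templates n)
  = Some (grid_after i.+1, templates n).
Proof.
move=> hi; have [B_sol _] := sol_square_spec puzzle solved hi.
have [s_gt0 x_le y_le] := square_in_grid solved B_sol.
have s_range : 0 < sq_size (B i) <= n by rewrite s_gt0; lia.
have s_lt : (sq_size (B i)).-1 < n by lia.
have corner_lt : sq_row (B i) * m + sq_col (B i) < m * m.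
  by rewrite cell_index_lt // (leq_trans _ n_le_m) //; lia.
have mm_gt0 : 0 < m * m by rewrite muln_gt0 andbb (leq_trans _ n_le_m) //; lia.
rewrite /meadows_round !cc_openE ?size_painted ?size_templates //=.
rewrite -(nth_templates s_range) cc_close_put_back ?size_templates // eqxx.
rewrite nth_row1_cc_open ?size_templates // nth_templates //.
have k_le : grid_r1 rnd i %% (m * m) <= m * m by rewrite ltnW // ltn_pmod.
rewrite row1_pshift size_painted print_rot ?size_painted // modn_unshift //.
rewrite print_grid_after //= cc_closeE ?size_rot ?size_painted // rotK.
rewrite (_ : all _ _ = true) //; apply/allP => t; rewrite mem_iota add0n => ht.
by rewrite nth_grid_after_dot.
Qed.

Lemma foldl_rounds j : j <= size dots ->
  foldl (fun acc i => obind (meadows_round n dots sol rnd i) acc)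
        (Some (grid_after 0, templates n)) (iota 0 j)
  = Some (grid_after j, templates n).
Proof.
elim: j => [|j IH] hj //; rewrite -addn1 iotaD foldl_cat IH ?(ltnW hj) // add0n addn1.
exact: meadows_round_grid_after.
Qed.

Lemma grid_after0 : grid_after 0 = nseq (m * m) blank.
Proof.
apply: (@eq_from_nth _ blank) => [|q]; rewrite size_painted ?size_nseq // => hq.
by rewrite nth_mkseq ?nth_nseq ?hq.
Qed.

Lemma nth_grid_after_all p : p < m * m ->
  nth blank (grid_after (size dots)) p = if (p %/ m < n) && (p %% m < n) then num 1 else blank.
Proof.
move=> hp; rewrite nth_mkseq //; congr (if _ then _ else _); apply/hasP/andP.
  move=> [_ /mapP [t t_iota ->]]; rewrite mem_iota add0n in t_iota.
  have [B_sol _] := sol_square_spec puzzle solved t_iota.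
  have [_ x_le y_le] := square_in_grid solved B_sol.
  by rewrite /in_square /= => /andP [/andP [_ h1] /andP [_ h2]]; lia.
move=> [h1 h2]; have [t ht in_t] := sol_squares_cover puzzle solved h1 h2.
by exists (B t) => //; apply: map_f; rewrite mem_iota.
Qed.

End Protocol.

Theorem lemma4 (n : nat) (dots : seq cell) (sol : seq square) (rnd : shuffles) :
  meadows_puzzle n dots -> is_solution n dots sol ->
  meadows_protocol n dots sol rnd = true.
Proof.
move=> puzzle solved; rewrite /meadows_protocol eqxx /= -(grid_after0 n dots sol).
rewrite foldl_rounds //; apply/allP => p; rewrite mem_iota add0n => hp.
by rewrite nth_grid_after_all.
Qed.
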